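(* Let $f(\mathbf{x})=\mathbf{x}^{T}A\mathbf{x}+b^{T}\mathbf{x}+1$ with $A\in\mathbb{R}^{n\times n}$ symmetric and $b\in\mathbb{R}^n$, and suppose $f$ admits a monic Hermitian determinantal representation of size $2$ (equivalently, $Q/(1,1)=A-\frac14bb^T$ is negative semidefinite of rank at most $3$). Call two such representations $(A_1,\dots,A_n)$ and $(B_1,\dots,B_n)$ (Hermitian $2\times2$ matrices with $f(\mathbf{x})=\det(I_2+\sum_jx_jA_j)=\det(I_2+\sum_jx_jB_j)$) unitarily equivalent if there is a unitary $2\times 2$ matrix $U$ with $UA_jU^{*}=B_j$ for all $j$. Then: (i) if $\operatorname{rank}(Q/(1,1))=3$ (so $f$ has a Hermitian but no symmetric monic determinantal representation of size $2$), the monic Hermitian determinantal representations of size $2$ of $f$ form exactly two unitary equivalence classes; (ii) if $\operatorname{rank}(Q/(1,1))\le 2$, all monic Hermitian determinantal representations of size $2$ of $f$ are unitarily equivalent to one another. *)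

(* Complex numbers: an arbitrary numClosedFieldType C
   (e.g. the complex numbers); real numbers are its elements in Num.real. *)
From HB Require Import structures.
From mathcomp Require Import all_boot all_order all_algebra.
Set Implicit Arguments. Unset Strict Implicit. Unset Printing Implicit Defensive.
Import Order.TTheory GRing.Theory Num.Theory.
Local Open Scope ring_scope.

Definition adjmx (C : numClosedFieldType) m n (M : 'M[C]_(m, n)) : 'M[C]_(n, m) :=
  (map_mx (fun z => z^*) M)^T.

Definition hermitian (C : numClosedFieldType) (M : 'M[C]_2) : Prop := adjmx M = M.

Definition unitary (C : numClosedFieldType) (U : 'M[C]_2) : Prop := U *m adjmx U = 1%:M.

Definition real_mx (C : numClosedFieldType) m n (M : 'M[C]_(m, n)) : Prop :=
  forall i j, M i j \is Num.real.

Definition quadf (C : numClosedFieldType) n (A : 'M[C]_n) (b : 'cV[C]_n)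
  (x : 'cV[C]_n) : C :=
  (x^T *m A *m x) 0 0 + (b^T *m x) 0 0 + 1.

Definition mhdr2 (C : numClosedFieldType) n (A : 'M[C]_n) (b : 'cV[C]_n)
  (R : 'I_n -> 'M[C]_2) : Prop :=
  (forall j, hermitian (R j)) /\
  forall x : 'cV[C]_n, real_mx x ->
    quadf A b x = \det (1%:M + \sum_(j < n) x j 0 *: R j).

Definition unit_equiv (C : numClosedFieldType) n (R S : 'I_n -> 'M[C]_2) : Prop :=
  exists U : 'M[C]_2, unitary U /\ forall j, U *m R j *m adjmx U = S j.

From Pilot Require Import Defs.
From HB Require Import structures.
From mathcomp Require Import all_boot all_order all_algebra.
From mathcomp Require Import ring.
Import Order.TTheory GRing.Theory Num.Theory.
Set Implicit Arguments. Unset Strict Implicit. Unset Printing Implicit Defensive.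
Local Open Scope ring_scope.

(* A Hermitian 2x2 matrix is a real scalar plus a traceless part, and the
   traceless part has real coordinates (its Pauli vector) in a 3-dimensional
   space on which unitary conjugation acts by rotations and transposition by a
   reflection. For a representation R of f the traces tr R_j = b_j and
   tr (R_i R_j) = b_i b_j - 2 A_ij are prescribed, i.e. the scalar parts and
   the Gram matrix of the Pauli vectors, which is -2 Q/(1,1). Two
   representations are then related by an orthogonal map; concretely, one
   diagonalizes some R_j1 with distinct eigenvalues and makes the off-diagonal
   entry of some R_j2 real positive in both tuples, after which the tuples
   agree up to conjugating every off-diagonal entry at once. That map is a
   rotation (a unitary equivalence) unless the Pauli vectors span all three
   dimensions, in which case it may be the reflection (equivalence with the
   transposed tuple).
   Finally, tr (PQS) - tr (SQP) is -1/2 times the determinant of the Pauli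
   vectors of P, Q, S: it is invariant under unitary conjugation and odd under
   transposition, so when rank Q/(1,1) = 3 no representation is equivalent to
   its transpose. *)

Lemma ord2P (i : 'I_2) : i = 0 \/ i = 1.
Proof. by case: i => [[|[|//]]] ?; [left | right]; apply: val_inj. Qed.

Lemma eq_mx22 (T : Type) (M N : 'M[T]_2) :
  M 0 0 = N 0 0 -> M 0 1 = N 0 1 -> M 1 0 = N 1 0 -> M 1 1 = N 1 1 -> M = N.
Proof.
move=> e00 e01 e10 e11; apply/matrixP=> i j.
by case: (ord2P i) => ->; case: (ord2P j) => ->.
Qed.

Lemma sum_ord2 (V : nmodType) (F : 'I_2 -> V) : \sum_(k < 2) F k = F 0 + F 1.
Proof. by rewrite !big_ord_recl big_ord0 addr0; congr (F _ + F _); apply: val_inj. Qed.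

Lemma sum_ord3 (V : nmodType) (F : 'I_3 -> V) : \sum_(k < 3) F k = F 0 + F 1 + F 2.
Proof.
rewrite !big_ord_recl big_ord0 addr0 addrA.
by congr (F _ + F _ + F _); apply: val_inj.
Qed.

Section MatrixEntries.
Variable R : comRingType.
Implicit Types M N : 'M[R]_2.

Lemma mulmx22E M N i j : (M *m N) i j = M i 0 * N 0 j + M i 1 * N 1 j.
Proof. by rewrite mxE sum_ord2. Qed.

Lemma mxtrace22 M : \tr M = M 0 0 + M 1 1.
Proof. by rewrite /mxtrace sum_ord2. Qed.

Lemma det_mx22 M : \det M = M 0 0 * M 1 1 - M 0 1 * M 1 0.
Proof.
rewrite (expand_det_row _ 0) sum_ord2 /cofactor !det_mx11 !mxE /=.
have -> : (lift 0 0 : 'I_2) = 1 by apply: val_inj.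
have -> : (lift 1 0 : 'I_2) = 0 by apply: val_inj.
by rewrite expr0 expr1 !mul1r mulN1r mulrN.
Qed.

Lemma det_mx33 (M : 'M[R]_3) :
  \det M = M 0 0 * (M 1 1 * M 2 2 - M 1 2 * M 2 1)
         - M 0 1 * (M 1 0 * M 2 2 - M 1 2 * M 2 0)
         + M 0 2 * (M 1 0 * M 2 1 - M 1 1 * M 2 0).
Proof.
pose m a b := M (inord a) (inord b).
have hM i j : M i j = m i j by rewrite /m !inord_val.
rewrite (expand_det_row _ 0) !big_ord_recl big_ord0 /cofactor.
rewrite !(expand_det_row _ 0) !big_ord_recl /cofactor !det_mx11 !mxE !hM !big_ord0.
by rewrite /= /bump /= ?add1n; ring.
Qed.

End MatrixEntries.

Definition ttr (R : ringType) n (P Q S : 'M[R]_n) :=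
  \tr (P *m Q *m S) - \tr (S *m Q *m P).

Lemma ttr_tr (R : comRingType) n (P Q S : 'M[R]_n) : ttr P^T Q^T S^T = - ttr P Q S.
Proof. by rewrite /ttr -!trmx_mul !mxtrace_tr !mulmxA opprB. Qed.

Lemma eq_lincomb1 (R : idomainType) (k c x y l r : R) : k != 0 -> l = r ->
  k * (x - y) = c * (l - r) -> x = y.
Proof.
move=> hk -> /eqP; rewrite subrr mulr0 mulf_eq0 (negbTE hk) subr_eq0.
by move/eqP.
Qed.

Lemma eq_lincomb2 (R : idomainType) (k c1 c2 x y l1 r1 l2 r2 : R) : k != 0 ->
  l1 = r1 -> l2 = r2 -> k * (x - y) = c1 * (l1 - r1) + c2 * (l2 - r2) -> x = y.
Proof.
move=> hk e1 -> e; apply: (eq_lincomb1 (c := c1) hk e1).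
by rewrite e subrr mulr0 addr0.
Qed.

Lemma eq_lincomb3 (R : idomainType) (k c1 c2 c3 x y l1 r1 l2 r2 l3 r3 : R) :
  k != 0 -> l1 = r1 -> l2 = r2 -> l3 = r3 ->
  k * (x - y) = c1 * (l1 - r1) + c2 * (l2 - r2) + c3 * (l3 - r3) -> x = y.
Proof.
move=> hk e1 e2 -> e; apply: (eq_lincomb2 (c1 := c1) (c2 := c2) hk e1 e2).
by rewrite e subrr mulr0 addr0.
Qed.

Section ComplexNumbers.
Variable C : numClosedFieldType.
Implicit Types x y z : C.

Lemma eq_or_conj_of_re_norm x y :
  x + x^* = y + y^* -> x * x^* = y * y^* -> y = x \/ y = x^*.
Proof.
move=> eRe eN; have : (y - x) * (y - x^*) = 0.
  by apply: (eq_lincomb2 (c1 := - y) (c2 := 1) (oner_neq0 C) eRe eN); ring.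
by move/eqP; rewrite mulf_eq0 !subr_eq0 => /orP[] /eqP; [left | right].
Qed.

Lemma cross_eq_not_conj x y z : x^* != x ->
  x * y^* + x^* * y = x * z^* + x^* * z -> z = y \/ z = y^* -> z = y.
Proof.
move=> hx ecross [//| ez]; rewrite ez in ecross *.
have : (x - x^*) * (y^* - y) = 0.
  by apply: (eq_lincomb1 (c := 1) (oner_neq0 C) ecross); rewrite conjCK; ring.
by move/eqP; rewrite mulf_eq0 subr_eq0 eq_sym (negbTE hx) /= subr_eq0 => /eqP.
Qed.

Lemma unit_modulus_phase (q : C) : q != 0 -> (`|q| / q) * (`|q| / q)^* = 1.
Proof.
move=> hq; rewrite rmorphM fmorphV /= (geC0_conj (normr_ge0 q)) mulrACA -expr2.
by rewrite normCK -invfM mulfV // mulf_neq0 // conjC_eq0.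
Qed.

End ComplexNumbers.

Section Adjoint.
Variable C : numClosedFieldType.
Implicit Types (M N U V : 'M[C]_2).

Lemma adjmxE m n (M : 'M[C]_(m, n)) i j : adjmx M i j = (M j i)^*.
Proof. by rewrite !mxE. Qed.

Lemma adjmxM m n p (P : 'M[C]_(m, n)) (Q : 'M[C]_(n, p)) :
  adjmx (P *m Q) = adjmx Q *m adjmx P.
Proof.
apply/matrixP=> i j; rewrite !mxE rmorph_sum; apply: eq_bigr => k _.
by rewrite !mxE rmorphM mulrC.
Qed.

Lemma adjmxK m n (P : 'M[C]_(m, n)) : adjmx (adjmx P) = P.
Proof. by apply/matrixP=> i j; rewrite !mxE conjCK. Qed.

Lemma adjmx1 n : adjmx (1%:M : 'M[C]_n) = 1%:M.
Proof. by apply/matrixP=> i j; rewrite !mxE rmorph_nat eq_sym. Qed.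

Lemma adjmx_conj m n (P : 'M[C]_(m, n)) :
  adjmx (map_mx Num.conj P) = map_mx Num.conj (adjmx P).
Proof. by apply/matrixP=> i j; rewrite !mxE. Qed.

Lemma hermitian_entries M : Defs.hermitian M ->
  [/\ (M 0 0)^* = M 0 0, (M 1 1)^* = M 1 1 & M 1 0 = (M 0 1)^*].
Proof.
move=> hM; have e i j : M i j = (M j i)^* by rewrite -{1}hM adjmxE.
by rewrite -e [M 1 1]e [M 1 0]e conjCK.
Qed.

Lemma hermitian_eq M N : Defs.hermitian M -> Defs.hermitian N ->
  M 0 0 = N 0 0 -> M 1 1 = N 1 1 -> M 0 1 = N 0 1 -> M = N.
Proof.
move=> /hermitian_entries [_ _ hM] /hermitian_entries [_ _ hN] e00 e11 e01.
by apply: eq_mx22; rewrite // hM hN e01.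
Qed.

Lemma hermitian_conj U M : Defs.hermitian M -> Defs.hermitian (U *m M *m adjmx U).
Proof. by move=> hM; rewrite /Defs.hermitian !adjmxM adjmxK hM mulmxA. Qed.

Lemma unitaryC U : unitary U -> adjmx U *m U = 1%:M.
Proof. exact: mulmx1C. Qed.

Lemma unitary1 : unitary (1%:M : 'M[C]_2).
Proof. by rewrite /unitary adjmx1 mulmx1. Qed.

Lemma unitary_adj U : unitary U -> unitary (adjmx U).
Proof. by move=> hU; rewrite /unitary adjmxK unitaryC. Qed.

Lemma unitary_mul U V : unitary U -> unitary V -> unitary (U *m V).
Proof. by move=> hU hV; rewrite /unitary adjmxM mulmxA -(mulmxA U) hV mulmx1. Qed.

Lemma unitary_conj U : unitary U -> unitary (map_mx Num.conj U).
Proof. by move=> hU; rewrite /unitary adjmx_conj -map_mxM hU map_mx1. Qed.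

Lemma ttr_unitary U M N P : unitary U ->
  ttr (U *m M *m adjmx U) (U *m N *m adjmx U) (U *m P *m adjmx U) = ttr M N P.
Proof.
move=> hU; have hUU := unitaryC hU.
have e X Y Z : \tr ((U *m X *m adjmx U) *m (U *m Y *m adjmx U) *m (U *m Z *m adjmx U))
   = \tr (X *m Y *m Z).
  rewrite -!mulmxA (mulmxA (adjmx U) U) hUU mul1mx (mulmxA (adjmx U) U) hUU mul1mx.
  by rewrite mxtrace_mulC -!mulmxA hUU mulmx1 !mulmxA.
by rewrite /ttr !e.
Qed.

Lemma hermitian_diagonalize M : Defs.hermitian M ->
  exists U, unitary U /\ (U *m M *m adjmx U) 0 1 = 0.
Proof.
move=> hM; have adjE N : adjmx N = map_mx Num.conj N^T by rewrite /adjmx map_trmx.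
have /orthomx_spectralP eM : M \is normalmx by apply/normalmxP; rewrite -adjE hM.
set U := spectralmx M in eM; have hU : U \is unitarymx := spectral_unitarymx M.
exists U; split; first by rewrite /unitary adjE; apply/unitarymxP.
have /unitarymxP hUU := hU; rewrite -adjE in hUU.
rewrite [in U *m M]eM invmx_unitary // -adjE !mulmxA hUU mul1mx -mulmxA hUU.
by rewrite mulmx1 mxE.
Qed.

Definition swap_mx : 'M[C]_2 := \matrix_(i, j) (i != j)%:R.

Lemma unitary_swap : unitary swap_mx.
Proof.
by apply: eq_mx22; rewrite mulmx22E !adjmxE !mxE /= ?rmorph0 ?rmorph1 /=; ring.
Qed.

Lemma swap_conjE M :
  let N := swap_mx *m M *m adjmx swap_mx in
  [/\ N 0 0 = M 1 1, N 1 1 = M 0 0 & N 0 1 = M 1 0].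
Proof. by rewrite /= !mulmx22E !adjmxE !mxE /= ?rmorph0 ?rmorph1; split; ring. Qed.

Lemma herm_gap M : Defs.hermitian M ->
  2 * \tr (M *m M) - \tr M ^+ 2
  = (M 0 0 - M 1 1) * (M 0 0 - M 1 1)^* + 4 * (M 0 1 * (M 0 1)^*).
Proof.
move=> /hermitian_entries [h0 h1 h10].
by rewrite !mxtrace22 !mulmx22E rmorphB /= h0 h1 h10; ring.
Qed.

Lemma herm_gap_eq0 M : Defs.hermitian M -> 2 * \tr (M *m M) = \tr M ^+ 2 ->
  M 0 1 = 0 /\ M 0 0 = M 1 1.
Proof.
move=> hM /eqP; rewrite -subr_eq0 herm_gap //.
have h4 : 0 <= 4 * (M 0 1 * (M 0 1)^*) by rewrite mulr_ge0 ?ler0n ?mul_conjC_ge0.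
rewrite paddr_eq0 ?mul_conjC_ge0 // [4 * _ == 0]mulf_eq0 pnatr_eq0 /=.
by rewrite !mul_conjC_eq0 subr_eq0 => /andP[/eqP -> /eqP].
Qed.

Lemma scalar_herm_eq M N : Defs.hermitian M -> Defs.hermitian N -> \tr M = \tr N ->
  2 * \tr (M *m M) = \tr M ^+ 2 -> 2 * \tr (N *m N) = \tr N ^+ 2 -> M = N.
Proof.
move=> hM hN eT /(herm_gap_eq0 hM) [oM dM] /(herm_gap_eq0 hN) [oN dN].
have e00 : M 0 0 = N 0 0.
  move: eT; rewrite !mxtrace22 -dM -dN => eT.
  by apply: (eq_lincomb1 (c := 1) (_ : 2 != 0) eT); rewrite ?pnatr_eq0 //; ring.
by apply: hermitian_eq; rewrite // -?dM -?dN ?oM ?oN.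
Qed.

Lemma diag_herm_eq_or_swap M N : Defs.hermitian M -> Defs.hermitian N ->
  M 0 1 = 0 -> N 0 1 = 0 -> \tr M = \tr N -> \tr (M *m M) = \tr (N *m N) ->
  N = M \/ N = swap_mx *m M *m adjmx swap_mx.
Proof.
move=> hM hN hM01 hN01 eT eS.
have [_ _ hM10] := hermitian_entries hM; have [_ _ hN10] := hermitian_entries hN.
rewrite !mxtrace22 !mulmx22E hM10 hN10 hM01 hN01 rmorph0 ?mulr0 ?mul0r ?addr0 ?add0r
  in eT eS.
have : 2 * ((N 0 0 - M 0 0) * (N 0 0 - M 1 1)) = 0.
  transitivity (N 0 0 * N 0 0 + N 1 1 * N 1 1 - (M 0 0 * M 0 0 + M 1 1 * M 1 1)
    - (N 0 0 + N 1 1 - (M 0 0 + M 1 1)) * (N 1 1 - N 0 0 + M 0 0 + M 1 1)); first ring.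
  by rewrite eS eT !subrr mul0r subr0.
move/eqP; rewrite mulf_eq0 pnatr_eq0 mulf_eq0 !subr_eq0 /=.
case/orP=> /eqP e00; [left | right].
  apply: hermitian_eq; rewrite ?hM01 ?hN01 //.
  by move: eT; rewrite e00 => /addrI.
have [s00 s11 s01] := swap_conjE M.
apply: (hermitian_eq hN (hermitian_conj _ hM)); rewrite ?s00 ?s11 ?s01 ?hM10 ?hN01
  ?hM01 ?rmorph0 //.
by move: eT; rewrite e00 addrC => /addrI.
Qed.

Definition phase_mx (u : C) : 'M[C]_2 := diag_mx (\row_k (if k == 0 then u else 1)).

Lemma unitary_phase u : u * u^* = 1 -> unitary (phase_mx u).
Proof.
move=> hu; apply: eq_mx22; rewrite mulmx22E !adjmxE !mxE /= ?rmorph0 ?rmorph1 /=;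
  by rewrite ?hu; ring.
Qed.

Lemma phase_conjE u M : u * u^* = 1 ->
  let N := phase_mx u *m M *m adjmx (phase_mx u) in
  [/\ N 0 0 = M 0 0, N 1 1 = M 1 1 & N 0 1 = u * M 0 1].
Proof.
move=> hu; rewrite /= !mulmx22E !adjmxE !mxE /= ?rmorph0 ?rmorph1.
split; [rewrite -[RHS]mul1r -hu | | ]; ring.
Qed.

End Adjoint.
Arguments swap_mx {C}.
Arguments unitary_swap {C}.

(** * Pauli coordinates and the Gram matrix *)

Section Pauli.
Variable C : numClosedFieldType.

(* Coordinates of the traceless part of a Hermitian matrix in the basis
   diag(1,-1)/2, [[0,1],[1,0]]/2, [[0,1],[-1,0]]/2; the last one is imaginary. *)
Definition pauli (M : 'M[C]_2) : 'rV[C]_3 :=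
  \row_k (if k == 0 then M 0 0 - M 1 1
          else if k == 1 then M 0 1 + (M 0 1)^* else M 0 1 - (M 0 1)^*).

Definition pauli_mx n (Y : 'I_n -> 'M[C]_2) : 'M[C]_(n, 3) := \matrix_i pauli (Y i).

Definition pauli_weight : 'rV[C]_3 := \row_k (if k == 2 then - 2^-1 else 2^-1).

Lemma ttr_pauli n (Y : 'I_n -> 'M[C]_2) (f : 'I_3 -> 'I_n) :
  (forall j, Defs.hermitian (Y j)) ->
  2 * ttr (Y (f 0)) (Y (f 1)) (Y (f 2)) = - \det (rowsub f (pauli_mx Y)).
Proof.
move=> hY; rewrite det_mx33 !mxE /= /ttr !mxtrace22 !mulmx22E.
have [_ _ ->] := hermitian_entries (hY (f 0)).
have [_ _ ->] := hermitian_entries (hY (f 1)).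
have [_ _ ->] := hermitian_entries (hY (f 2)).
by ring.
Qed.

Definition herm_data n (t : 'I_n -> C) (G : 'I_n -> 'I_n -> C) (Y : 'I_n -> 'M[C]_2) :=
  [/\ forall j, Defs.hermitian (Y j), forall j, \tr (Y j) = t j
    & forall i j, \tr (Y i *m Y j) = G i j].

Definition gram n (t : 'I_n -> C) (G : 'I_n -> 'I_n -> C) : 'M[C]_n :=
  \matrix_(i, j) (G i j - t i * t j / 2).

Variables (n : nat) (t : 'I_n -> C) (G : 'I_n -> 'I_n -> C) (Y : 'I_n -> 'M[C]_2).
Hypothesis hY : herm_data t G Y.

Lemma gram_pauli : gram t G = pauli_mx Y *m diag_mx pauli_weight *m (pauli_mx Y)^T.
Proof.
have [hH hT hG] := hY; apply/matrixP=> i j.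
rewrite !mxE sum_ord3 !mul_mx_diag !mxE /= -hG -!hT !mxtrace22 !mulmx22E.
have [_ _ ->] := hermitian_entries (hH i); have [_ _ ->] := hermitian_entries (hH j).
by field.
Qed.

Lemma pauli_minor_rank_gram (f : 'I_3 -> 'I_n) :
  \det (rowsub f (pauli_mx Y)) != 0 -> (3 <= \rank (gram t G))%N.
Proof.
move=> hdet; set M := rowsub f (pauli_mx Y).
have hw : diag_mx pauli_weight \in unitmx.
  rewrite unitmxE unitfE det_diag !big_ord_recl big_ord0 !mxE /=.
  by rewrite mulr1 !mulf_neq0 ?oppr_eq0 ?invr_eq0 ?pnatr_eq0.
have hM : M \in unitmx by rewrite unitmxE unitfE.
have -> : 3%N = \rank (M *m diag_mx pauli_weight *m M^T).
  by rewrite mxrank_unit // !unitmx_mul unitmx_tr hM hw.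
have -> : M *m diag_mx pauli_weight *m M^T =
          rowsub f 1%:M *m gram t G *m (rowsub f 1%:M)^T.
  by rewrite gram_pauli /M rowsubE trmx_mul !mulmxA.
by rewrite (leq_trans (mxrankM_maxl _ _)) // mxrankM_maxr.
Qed.

Lemma rank_gram_pauli_minor : (3 <= \rank (gram t G))%N ->
  exists f : 'I_3 -> 'I_n, \det (rowsub f (pauli_mx Y)) != 0.
Proof.
set V := pauli_mx Y => h3.
have rkV : \rank V = 3%N.
  apply/eqP; rewrite eqn_leq rank_leq_col (leq_trans h3) // gram_pauli.
  exact: leq_trans (mxrankM_maxl _ _) (mxrankM_maxl _ _).
exists (maxrankfun V \o cast_ord (esym rkV)).
rewrite -unitfE -unitmxE -row_free_unit /row_free.
have leV : (\rank V <= 3)%N by rewrite rkV.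
rewrite (eqmx_rowsub_comp _ _ leV (@cast_ord_inj _ _ _)).
by move/eqP: (maxrowsub_free V) => ->; rewrite rkV.
Qed.

Lemma rank_gram_ge3P :
  (3 <= \rank (gram t G))%N <-> exists a b c, ttr (Y a) (Y b) (Y c) != 0.
Proof.
have [hH _ _] := hY; have two : 2 != 0 :> C by rewrite pnatr_eq0.
split.
  move=> /rank_gram_pauli_minor [f hf]; exists (f 0), (f 1), (f 2).
  by rewrite -(mulrI_eq0 _ (lregP two)) (ttr_pauli f hH) oppr_eq0.
move=> [a [b [c habc]]]; pose f (k : 'I_3) := nth a [:: a; b; c] k.
apply: (pauli_minor_rank_gram (f := f)).
by rewrite -oppr_eq0 -(ttr_pauli f hH) mulf_neq0.
Qed.

End Pauli.

Section Equivalence.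
Variables (C : numClosedFieldType) (n : nat).
Implicit Types (Y Z W : 'I_n -> 'M[C]_2).

Definition tr_tuple Y j := (Y j)^T.

Lemma eq_unit_equiv Y Z : (forall j, Y j = Z j) -> unit_equiv Y Z.
Proof.
move=> e; exists 1%:M; split=> [|j]; first exact: unitary1.
by rewrite adjmx1 mul1mx mulmx1.
Qed.

Lemma unit_equiv_sym Y Z : unit_equiv Y Z -> unit_equiv Z Y.
Proof.
case=> U [hU e]; exists (adjmx U); split=> [|j]; first exact: unitary_adj.
by rewrite -e adjmxK !mulmxA unitaryC // mul1mx -mulmxA unitaryC // mulmx1.
Qed.

Lemma unit_equiv_trans Y Z W : unit_equiv Y Z -> unit_equiv Z W -> unit_equiv Y W.
Proof.
case=> U [hU eU] [V [hV eV]]; exists (V *m U); split=> [|j].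
  exact: unitary_mul.
by rewrite -eV -eU adjmxM !mulmxA.
Qed.

Lemma unit_equiv_tr Y Z : unit_equiv Y Z -> unit_equiv (tr_tuple Y) (tr_tuple Z).
Proof.
case=> U [hU e]; exists (map_mx Num.conj U); split=> [|j].
  exact: unitary_conj.
rewrite /tr_tuple -e !trmx_mul mulmxA /adjmx trmxK; congr (_ *m _).
by apply/matrixP=> a c; rewrite !mxE conjCK.
Qed.

Lemma unit_equiv_trC Y Z : unit_equiv (tr_tuple Y) Z -> unit_equiv Y (tr_tuple Z).
Proof.
move/unit_equiv_tr; apply: unit_equiv_trans.
by apply: eq_unit_equiv => j; rewrite /tr_tuple trmxK.
Qed.

Lemma herm_data_equiv t G Y Z : unit_equiv Y Z -> herm_data t G Y -> herm_data t G Z.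
Proof.
case=> U [hU eZ] [hH hT hG]; split=> [j|j|i j]; rewrite -?eZ.
- exact: hermitian_conj.
- by rewrite mxtrace_mulC mulmxA unitaryC // mul1mx.
- rewrite -!mulmxA (mulmxA (adjmx U)) unitaryC // mul1mx.
  by rewrite mxtrace_mulC -!mulmxA unitaryC // mulmx1.
Qed.

Lemma not_unit_equiv_tr t G Y : herm_data t G Y ->
  (3 <= \rank (gram t G))%N -> ~ unit_equiv Y (tr_tuple Y).
Proof.
move=> hY /(rank_gram_ge3P hY) [a [b [c]]] + [U [hU eU]]; apply/negP; rewrite negbK.
have := ttr_unitary (Y a) (Y b) (Y c) hU; rewrite !eU ttr_tr => /eqP.
by rewrite -subr_eq0 -opprD oppr_eq0 -mulr2n mulrn_eq0.
Qed.

End Equivalence.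

(** * Comparing two tuples with the same trace data *)

Section Comparison.
Variables (C : numClosedFieldType) (n : nat) (t : 'I_n -> C) (G : 'I_n -> 'I_n -> C).
Variables (Y Y' : 'I_n -> 'M[C]_2) (j1 : 'I_n).
Hypotheses (hY : herm_data t G Y) (hY' : herm_data t G Y').
Hypotheses (eq_j1 : Y j1 = Y' j1) (diag_j1 : Y j1 0 1 = 0)
  (gap_j1 : Y j1 0 0 != Y j1 1 1).

Lemma diag_entries_eq j : Y j 0 0 = Y' j 0 0 /\ Y j 1 1 = Y' j 1 1.
Proof.
have [hH hT hG] := hY; have [_ hT' hG'] := hY'.
have [_ _ h10] := hermitian_entries (hH j1).
have eT : Y j 0 0 + Y j 1 1 = Y' j 0 0 + Y' j 1 1 by rewrite -!mxtrace22 hT hT'.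
have eA : \tr (Y j *m Y j1) = \tr (Y' j *m Y' j1) by rewrite hG hG'.
rewrite !mxtrace22 !mulmx22E -eq_j1 h10 diag_j1 rmorph0 in eA.
have e00 : Y j 0 0 = Y' j 0 0.
  have hk : Y j1 0 0 - Y j1 1 1 != 0 by rewrite subr_eq0.
  by apply: (eq_lincomb2 (c1 := 1) (c2 := - Y j1 1 1) hk eA eT); ring.
by split=> //; move: eT; rewrite e00 => /addrI.
Qed.

Lemma offdiag_cross_eq j k :
  Y j 0 1 * (Y k 0 1)^* + (Y j 0 1)^* * Y k 0 1 =
  Y' j 0 1 * (Y' k 0 1)^* + (Y' j 0 1)^* * Y' k 0 1.
Proof.
have [hH _ hG] := hY; have [hH' _ hG'] := hY'.
have [e00 e11] := diag_entries_eq j; have [f00 f11] := diag_entries_eq k.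
have [_ _ hj] := hermitian_entries (hH j); have [_ _ hj'] := hermitian_entries (hH' j).
have [_ _ hk] := hermitian_entries (hH k); have [_ _ hk'] := hermitian_entries (hH' k).
have eA : \tr (Y j *m Y k) = \tr (Y' j *m Y' k) by rewrite hG hG'.
rewrite !mxtrace22 !mulmx22E hj hj' hk hk' e00 e11 f00 f11 in eA.
by apply: (eq_lincomb1 (c := 1) (oner_neq0 C) eA); ring.
Qed.

Lemma offdiag_norm_eq j : Y j 0 1 * (Y j 0 1)^* = Y' j 0 1 * (Y' j 0 1)^*.
Proof.
have two : 2 != 0 :> C by rewrite pnatr_eq0.
by apply: (eq_lincomb1 (c := 1) two (offdiag_cross_eq j j)); ring.
Qed.

Lemma eq_of_offdiag_eq : (forall j, Y' j 0 1 = Y j 0 1) -> forall j, Y j = Y' j.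
Proof.
move=> hq j; have [e00 e11] := diag_entries_eq j.
by apply: hermitian_eq; rewrite ?hq //; [case: hY | case: hY'].
Qed.

Lemma tr_eq_of_offdiag_conj :
  (forall j, Y' j 0 1 = (Y j 0 1)^*) -> forall j, (Y j)^T = Y' j.
Proof.
move=> hq j; have [e00 e11] := diag_entries_eq j.
have [hH _ _] := hY; have [hH' _ _] := hY'.
have [_ _ h10] := hermitian_entries (hH j); have [_ _ h10'] := hermitian_entries (hH' j).
by apply: eq_mx22; rewrite !mxE ?e00 ?e11 ?h10 ?h10' ?hq ?conjCK.
Qed.

Variable j2 : 'I_n.
Hypotheses (eq_j2 : Y j2 = Y' j2) (real_j2 : (Y j2 0 1)^* = Y j2 0 1)
  (nz_j2 : Y j2 0 1 != 0).

Lemma offdiag_eq_or_conj j : Y' j 0 1 = Y j 0 1 \/ Y' j 0 1 = (Y j 0 1)^*.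
Proof.
apply: eq_or_conj_of_re_norm (offdiag_norm_eq j).
have := offdiag_cross_eq j j2; rewrite -eq_j2 real_j2 => eRe.
by apply: (eq_lincomb1 (c := 1) nz_j2 eRe); ring.
Qed.

Lemma ttr_normal j :
  ttr (Y j1) (Y j2) (Y j) = (Y j1 0 0 - Y j1 1 1) * Y j2 0 1 * ((Y j 0 1)^* - Y j 0 1).
Proof.
have [hH _ _] := hY.
have [_ _ h1] := hermitian_entries (hH j1); have [_ _ h2] := hermitian_entries (hH j2).
have [_ _ h3] := hermitian_entries (hH j).
by rewrite /ttr !mxtrace22 !mulmx22E h1 h2 h3 diag_j1 real_j2 rmorph0; ring.
Qed.

Lemma normal_form_eq_or_tr :
  (forall j, Y j = Y' j) \/ ((3 <= \rank (gram t G))%N /\ forall j, (Y j)^T = Y' j).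
Proof.
case: (boolP [forall j, (Y j 0 1)^* == Y j 0 1]) => [/forallP hreal | /forallPn [j3 hj3]].
  left; apply: eq_of_offdiag_eq => j.
  by case: (offdiag_eq_or_conj j) => ->; rewrite ?(eqP (hreal j)).
have rk3 : (3 <= \rank (gram t G))%N.
  apply/(rank_gram_ge3P hY); exists j1, j2, j3; rewrite ttr_normal.
  by rewrite !mulf_neq0 // subr_eq0 // eq_sym.
case: (offdiag_eq_or_conj j3) => e3; [left | right].
  apply: eq_of_offdiag_eq => j; apply: (cross_eq_not_conj hj3) (offdiag_eq_or_conj j).
  by rewrite offdiag_cross_eq e3.
split=> //; apply: tr_eq_of_offdiag_conj => j.
rewrite -[Y' j 0 1]conjCK; congr (_^*); apply: (cross_eq_not_conj hj3).
  by rewrite conjCK offdiag_cross_eq e3 conjCK addrC.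
by case: (offdiag_eq_or_conj j) => ->; rewrite ?conjCK; [right | left].
Qed.

End Comparison.

Section Classification.
Variables (C : numClosedFieldType) (n : nat) (t : 'I_n -> C) (G : 'I_n -> 'I_n -> C).
Implicit Types (Y Z : 'I_n -> 'M[C]_2).

Definition equiv_or_tr_equiv Y Y' :=
  unit_equiv Y Y' \/ ((3 <= \rank (gram t G))%N /\ unit_equiv (tr_tuple Y) Y').

Lemma equiv_or_tr_equiv_transport Y Y' Z Z' : unit_equiv Y Z -> unit_equiv Y' Z' ->
  equiv_or_tr_equiv Z Z' -> equiv_or_tr_equiv Y Y'.
Proof.
move=> eZ eZ' [e | [rk e]]; [left | right; split=> //].
  exact: unit_equiv_trans eZ (unit_equiv_trans e (unit_equiv_sym eZ')).
exact: unit_equiv_trans (unit_equiv_tr eZ) (unit_equiv_trans e (unit_equiv_sym eZ')).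
Qed.

Lemma phase_normalize Y j2 : Y j2 0 1 != 0 ->
  exists Z, [/\ unit_equiv Y Z, forall j, Z j 0 0 = Y j 0 0 /\ Z j 1 1 = Y j 1 1,
    forall j, Y j 0 1 = 0 -> Z j 0 1 = 0 & Z j2 0 1 = `|Y j2 0 1|].
Proof.
move=> hq; set u := `|Y j2 0 1| / Y j2 0 1; have hu := unit_modulus_phase hq.
exists (fun j => phase_mx u *m Y j *m adjmx (phase_mx u)); split.
- by exists (phase_mx u); split=> //; exact: unitary_phase.
- by move=> j; have [-> -> _] := phase_conjE (Y j) hu.
- by move=> j hj; have [_ _ ->] := phase_conjE (Y j) hu; rewrite hj mulr0.
- by have [_ _ ->] := phase_conjE (Y j2) hu; rewrite mulfVK.
Qed.

Lemma common_diagonal_equiv_or_tr Y Y' j1 :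
  herm_data t G Y -> herm_data t G Y' ->
  Y j1 = Y' j1 -> Y j1 0 1 = 0 -> Y j1 0 0 != Y j1 1 1 -> equiv_or_tr_equiv Y Y'.
Proof.
move=> hY hY' e1 d1 g1.
have norm_eq := offdiag_norm_eq hY hY' e1 d1 g1.
case: (boolP [forall j, Y j 0 1 == 0]) => [/forallP hz | /forallPn [j2 hq]].
  left; apply/eq_unit_equiv/(eq_of_offdiag_eq hY hY' e1 d1 g1) => j.
  by apply/eqP; rewrite (eqP (hz j)) -mul_conjC_eq0 -norm_eq (eqP (hz j)) mul0r.
have hq' : Y' j2 0 1 != 0 by rewrite -mul_conjC_eq0 -norm_eq mul_conjC_eq0.
have [Z [eZ dZ oZ nZ]] := phase_normalize hq.
have [Z' [eZ' dZ' oZ' nZ']] := phase_normalize hq'.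
have hZ := herm_data_equiv eZ hY; have hZ' := herm_data_equiv eZ' hY'.
have [[hH _ _] [hH' _ _]] := (hZ, hZ').
have diag_eq j : Z j 0 0 = Z' j 0 0 /\ Z j 1 1 = Z' j 1 1.
  have [e00 e11] := diag_entries_eq hY hY' e1 d1 g1 j.
  by have [-> ->] := dZ j; have [-> ->] := dZ' j.
have d1' : Z j1 0 1 = 0 by apply: oZ.
have e1' : Z j1 = Z' j1.
  have [e00 e11] := diag_eq j1.
  by apply: hermitian_eq; rewrite // d1' oZ' // -e1.
have g1' : Z j1 0 0 != Z j1 1 1 by have [-> ->] := dZ j1.
have e2 : Z j2 = Z' j2.
  have [e00 e11] := diag_eq j2.
  by apply: hermitian_eq; rewrite // nZ nZ' !normC_def norm_eq.
have r2 : (Z j2 0 1)^* = Z j2 0 1 by rewrite nZ geC0_conj.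
have n2 : Z j2 0 1 != 0 by rewrite nZ normr_eq0.
apply: (equiv_or_tr_equiv_transport eZ eZ').
case: (normal_form_eq_or_tr hZ hZ' e1' d1' g1' e2 r2 n2) => [e | [rk e]].
  by left; apply: eq_unit_equiv.
by right; split=> //; apply: eq_unit_equiv.
Qed.

Lemma common_diagonal Y Y' j1 : herm_data t G Y -> herm_data t G Y' ->
  2 * G j1 j1 != t j1 ^+ 2 ->
  exists Z Z', [/\ unit_equiv Y Z, unit_equiv Y' Z', Z j1 = Z' j1,
    Z j1 0 1 = 0 & Z j1 0 0 != Z j1 1 1].
Proof.
move=> hY hY' hgap; have [[hH _ _] [hH' _ _]] := (hY, hY').
have [U [hU dU]] := hermitian_diagonalize (hH j1).
have [U' [hU' dU']] := hermitian_diagonalize (hH' j1).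
pose Z j := U *m Y j *m adjmx U; pose Z0 j := U' *m Y' j *m adjmx U'.
have eZ : unit_equiv Y Z by exists U.
have eZ0 : unit_equiv Y' Z0 by exists U'.
have [[hZH hZT hZG] [hZ0H hZ0T hZ0G]] := (herm_data_equiv eZ hY, herm_data_equiv eZ0 hY').
have [V [hV eV]] : exists V, unitary V /\ Z j1 = V *m Y' j1 *m adjmx V.
  have [e|e] : Z j1 = Z0 j1 \/ Z j1 = swap_mx *m Z0 j1 *m adjmx swap_mx.
    by apply: diag_herm_eq_or_swap; rewrite ?hZT ?hZ0T ?hZG ?hZ0G.
    by exists U'.
  exists (swap_mx *m U'); split; first exact: unitary_mul unitary_swap hU'.
  by rewrite e adjmxM !mulmxA.
exists Z, (fun j => V *m Y' j *m adjmx V); split=> //; first by exists V.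
apply: contra hgap => /eqP e; rewrite -hZG -hZT; apply/eqP/eqP.
by rewrite -subr_eq0 herm_gap // dU e subrr mul0r mulr0 addr0.
Qed.

Lemma herm_data_equiv_or_tr Y Y' :
  herm_data t G Y -> herm_data t G Y' -> equiv_or_tr_equiv Y Y'.
Proof.
move=> hY hY'.
case: (boolP [forall j, 2 * G j j == t j ^+ 2]) => [/forallP hs | /forallPn [j1 hj1]].
  left; apply: eq_unit_equiv => j; have [[hH hT hG] [hH' hT' hG']] := (hY, hY').
  by apply: scalar_herm_eq; rewrite ?hT ?hT' ?hG ?hG' //; apply/eqP.
have [Z [Z' [eZ eZ' e1 d1 g1]]] := common_diagonal hY hY' hj1.
apply: (equiv_or_tr_equiv_transport eZ eZ').
exact: common_diagonal_equiv_or_tr (herm_data_equiv eZ hY) (herm_data_equiv eZ' hY') e1 d1 g1.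
Qed.

End Classification.

Section Representations.
Variables (C : numClosedFieldType) (n : nat) (A : 'M[C]_n) (b : 'cV[C]_n).

Definition pair_vec (u v : C) (i j : 'I_n) : 'cV[C]_n :=
  \col_k (u * (k == i)%:R + v * (k == j)%:R).

Lemma sum_pair_vec (F : 'I_n -> C) u v i j :
  \sum_k F k * pair_vec u v i j k 0 = u * F i + v * F j.
Proof.
have sum_delta l : \sum_k F k * (k == l)%:R = F l.
  rewrite (bigD1 l) //= eqxx mulr1 big1 ?addr0 // => k /negbTE ->.
  by rewrite mulr0.
rewrite (eq_bigr (fun k => u * (F k * (k == i)%:R) + v * (F k * (k == j)%:R))).
  by rewrite big_split /= -!mulr_sumr !sum_delta.
by move=> k _; rewrite mxE; ring.
Qed.

Lemma quadf_pair_vec u v i j : quadf A b (pair_vec u v i j) =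
  u * (u * A i i + v * A j i) + v * (u * A i j + v * A j j) + (u * b i 0 + v * b j 0) + 1.
Proof.
have row_A l : ((pair_vec u v i j)^T *m A) 0 l = u * A i l + v * A j l.
  rewrite mxE -(sum_pair_vec (fun k => A k l)).
  by apply: eq_bigr => k _; rewrite mxE mulrC.
rewrite /quadf !mxE.
under eq_bigr => l _ do rewrite row_A.
under [X in _ + X + _]eq_bigr => k _ do rewrite mxE.
by rewrite !sum_pair_vec; ring.
Qed.

Lemma scaled_sum_pair_vec (R : 'I_n -> 'M[C]_2) u v i j :
  \sum_k (pair_vec u v i j) k 0 *: R k = u *: R i + v *: R j.
Proof.
apply/matrixP=> p q; rewrite summxE !mxE -(sum_pair_vec (fun k => R k p q)).
by apply: eq_bigr => k _; rewrite !mxE mulrC.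
Qed.

Lemma real_pair_vec u v i j :
  u \is Num.real -> v \is Num.real -> real_mx (pair_vec u v i j).
Proof. by move=> hu hv k l; rewrite mxE rpredD ?rpredM ?realn. Qed.

Lemma mhdr2_pair R u v i j : mhdr2 A b R -> u \is Num.real -> v \is Num.real ->
  quadf A b (pair_vec u v i j) = \det (1%:M + (u *: R i + v *: R j)).
Proof.
move=> [_ hdet] hu hv; rewrite -scaled_sum_pair_vec hdet //.
exact: real_pair_vec.
Qed.

Lemma mhdr2_herm_data R : A^T = A -> mhdr2 A b R ->
  herm_data (fun i => b i 0) (fun i j => b i 0 * b j 0 - 2 * A i j) R.
Proof.
move=> hA hR; have [hH _] := hR.
have eval_pair u v i j : u \is Num.real -> v \is Num.real ->
  u * (u * A i i + v * A j i) + v * (u * A i j + v * A j j) + (u * b i 0 + v * b j 0) + 1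
  = \det (1%:M + (u *: R i + v *: R j)).
  by move=> hu hv; rewrite -quadf_pair_vec (mhdr2_pair _ _ hR).
have hAji i j : A j i = A i j by rewrite -{1}hA mxE.
have two : 2 != 0 :> C by rewrite pnatr_eq0.
have htr i : \tr (R i) = b i 0.
  have := eval_pair 1 0 i i (rpred1 _) (rpred0 _).
  have := eval_pair (-1) 0 i i (rpredN1 _) (rpred0 _).
  rewrite !det_mx22 !mxE /= mxtrace22 => E2 E1.
  by apply: (eq_lincomb2 (c1 := -1) (c2 := 1) two E1 E2); ring.
split=> // i j.
have := eval_pair 1 1 i j (rpred1 _) (rpred1 _).
have := eval_pair 1 0 i i (rpred1 _) (rpred0 _); have := eval_pair 1 0 j j (rpred1 _) (rpred0 _).
have := htr i; have := htr j.
rewrite !det_mx22 !mxE /= hAji !mxtrace22 !mulmx22E => <- <- Ej Ei Eij.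
by apply: (eq_lincomb3 (c1 := 1) (c2 := -1) (c3 := -1) (oner_neq0 C) Eij Ei Ej); ring.
Qed.

Lemma mhdr2_tr R : mhdr2 A b R -> mhdr2 A b (tr_tuple R).
Proof.
move=> [hH hdet]; split=> [j | x hx].
  have e := hH j; rewrite /Defs.hermitian /adjmx map_trmx trmxK /tr_tuple.
  by rewrite -[in RHS]e trmxK.
rewrite hdet // -det_tr linearD /= trmx1 linear_sum; congr (\det (_ + _)).
by apply: eq_bigr => j _; rewrite linearZ.
Qed.

Lemma gram_mhdr2 :
  gram (fun i => b i 0) (fun i j => b i 0 * b j 0 - 2 * A i j)
  = - 2 *: (A - 4^-1 *: (b *m b^T)).
Proof.
by apply/matrixP=> i j; rewrite !mxE big_ord1 !mxE; field.
Qed.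

End Representations.

Theorem mainTheorem5 (C : numClosedFieldType) (n : nat)
  (A : 'M[C]_n) (b : 'cV[C]_n)
  (hAr : real_mx A) (hbr : real_mx b) (hAsym : A^T = A)
  (hrep : exists R, mhdr2 A b R) :
  (\rank (A - 4%:R^-1 *: (b *m b^T)) = 3%N ->
     exists R1 R2, [/\ mhdr2 A b R1, mhdr2 A b R2, ~ unit_equiv R1 R2 &
       forall R, mhdr2 A b R -> unit_equiv R R1 \/ unit_equiv R R2])
  /\
  (leq (\rank (A - 4%:R^-1 *: (b *m b^T))) 2 ->
     forall R1 R2, mhdr2 A b R1 -> mhdr2 A b R2 -> unit_equiv R1 R2).
Proof.
have data R (hR : mhdr2 A b R) := mhdr2_herm_data hAsym hR.
have -> : \rank (A - 4%:R^-1 *: (b *m b^T)) = \rank (gram (fun i => b i 0)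
    (fun i j => b i 0 * b j 0 - 2 * A i j)).
  by rewrite gram_mhdr2 mxrank_scale_nz // oppr_eq0 pnatr_eq0.
split=> [rk3 | rk2 R1 R2 hR1 hR2].
  have [R0 hR0] := hrep; exists R0, (tr_tuple R0); split.
  - exact: hR0.
  - exact: mhdr2_tr.
  - exact: not_unit_equiv_tr (data _ hR0) (eq_leq (esym rk3)).
  - move=> R hR; case: (herm_data_equiv_or_tr (data _ hR) (data _ hR0)) => [e | [_ e]].
      by left.
    by right; apply: unit_equiv_trC.
case: (herm_data_equiv_or_tr (data _ hR1) (data _ hR2)) => [// | [rk3 _]].
by have := leq_trans rk3 rk2.
Qed.
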